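(* Let $m,r$ be integers with $m>1$, $r>2$, and let $S\in\mathcal{MA}(m,r)$. Define $S_0=S$ and, for $n\in\mathbb{N}$, $S_{n+1}=\langle \mathrm{msg}(S_n)\setminus\{\mathrm{M}(S_n)\}\rangle$ if $S_n\neq\langle m,r\rangle$, and $S_{n+1}=\langle m,r\rangle$ otherwise. Then $S_n\in\mathcal{MA}(m,r)$ for all $n\in\mathbb{N}$, and $S_k=\langle m,r\rangle$ for all $k\geq \mathrm{e}(S)-2$.
   Context: $\mathbb{N}=\{0,1,2,\ldots\}$. A numerical semigroup is a subset $S\subseteq\mathbb{N}$ closed under addition, containing $0$, with finite complement; $\langle A\rangle$ is the submonoid generated by $A$; $\mathrm{msg}(S)=\{n_1<\cdots<n_e\}$ is the unique finite minimal system of generators, $\mathrm{e}(S)=e$, $\mathrm{m}(S)=n_1$, $\mathrm{r}(S)=n_2$, $\mathrm{M}(S)=n_e$. $S$ is a MANS-semigroup if $w(1)<\cdots<w(\mathrm{m}(S)-1)$, where $w(i)$ is the least element of $S$ congruent to $i$ modulo $\mathrm{m}(S)$. $\mathcal{MA}(m,r)$ is the set of MANS-semigroups $S$ with $\mathrm{m}(S)=m$ and $\mathrm{r}(S)=r$. *)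

From Stdlib Require Import ClassicalEpsilon.
From mathcomp Require Import all_boot.
Set Implicit Arguments. Unset Strict Implicit. Unset Printing Implicit Defensive.

(* <A> : the submonoid of N generated by the finite set A (given as a seq). *)
Inductive gen (A : seq nat) : nat -> Prop :=
| gen0 : gen A 0
| genS a x : a \in A -> gen A x -> gen A (a + x).

Definition seteq (S T : nat -> Prop) : Prop := forall x, S x <-> T x.

Definition numsg (S : nat -> Prop) : Prop :=
  [/\ S 0, (forall x y, S x -> S y -> S (x + y))
    & exists N, forall n, N <= n -> S n].

Definition is_msg (S : nat -> Prop) (s : seq nat) : Prop :=
  [/\ sorted ltn s, seteq (gen s) S
    & forall t : seq nat, {subset t <= s} -> seteq (gen t) S -> {subset s <= t}].

Definition msg (S : nat -> Prop) : seq nat := epsilon (inhabits [::]) (is_msg S).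

Definition emb (S : nat -> Prop) : nat := size (msg S).
Definition mult (S : nat -> Prop) : nat := nth 0 (msg S) 0.
Definition rS (S : nat -> Prop) : nat := nth 0 (msg S) 1.
Definition MS (S : nat -> Prop) : nat := last 0 (msg S).

Definition is_w (S : nat -> Prop) (m i w : nat) : Prop :=
  [/\ S w, w = i %[mod m] & forall y, S y -> y = i %[mod m] -> w <= y].

Definition MANS (S : nat -> Prop) : Prop :=
  numsg S /\
  forall i j wi wj, 1 <= i -> i < j -> j <= (mult S).-1 ->
    is_w S (mult S) i wi -> is_w S (mult S) j wj -> wi < wj.

Definition MA (m r : nat) (S : nat -> Prop) : Prop :=
  [/\ MANS S, mult S = m & rS S = r].

Fixpoint Sseq (S : nat -> Prop) (m r n : nat) : nat -> Prop :=
  match n with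
  | 0 => S
  | n'.+1 =>
      let T := Sseq S m r n' in
      fun x =>
        (~ seteq T (gen [:: m; r]) /\ gen [seq y <- msg T | y != MS T] x)
        \/ (seteq T (gen [:: m; r]) /\ gen [:: m; r] x)
  end.

From Stdlib Require Import ClassicalEpsilon Classical.
From mathcomp Require Import all_boot zify.
Set Implicit Arguments. Unset Strict Implicit. Unset Printing Implicit Defensive.

(* A generator g <> m of a numerical semigroup is the least element w(g mod m)
   of its residue class. So in a MANS-semigroup the largest generator M is
   w(k), k = M mod m, every other generator has residue 0 or below k, and
   r = 1 (mod m) because all elements below r are multiples of m. Dropping M
   preserves the MANS property: for 0 < i < k, w(i) does not involve M (else
   w(i) = M + y with w(i + m - k) <= y < w(i)), and every element of residue j
   of the smaller semigroup dominates one of residue j - 1, namely w(j - 1) if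
   j <= k, and otherwise the element obtained by lowering a summand whose
   residue lies below k. Since r = 1 (mod m) the smaller semigroup is still
   numerical, with the same m and r, and one fewer generator; after e(S) - 2
   steps only m and r remain. *)

Lemma gen_add A x y : gen A x -> gen A y -> gen A (x + y).
Proof. by move=> gx gy; elim: gx => [|a x' Ha _ IH] //; rewrite -addnA; apply: genS. Qed.

Lemma gen_mem A a : a \in A -> gen A a.
Proof. by move=> Ha; rewrite -[a]addn0; apply: genS => //; apply: gen0. Qed.

Lemma gen_mul A a t : a \in A -> gen A (t * a).
Proof. by move=> Ha; elim: t => [|t IH]; [exact: gen0 | rewrite mulSn; apply: genS]. Qed.

Lemma gen_subset A B x : {subset A <= B} -> gen A x -> gen B x.
Proof. by move=> sAB; elim=> [|a y Ha _ IH]; [exact: gen0 | apply: genS => //; apply: sAB]. Qed.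

Lemma gen_min (S : nat -> Prop) A x : numsg S -> {in A, forall a, S a} -> gen A x -> S x.
Proof. by move=> [S0 Sadd _] SA; elim=> [|a y Ha _ IH] //; apply: Sadd => //; apply: SA. Qed.

Lemma gen_rcons s M x :
  gen (rcons s M) x -> gen s x \/ exists2 y, gen (rcons s M) y & x = M + y.
Proof.
elim=> [|a x' Ha gx IH]; first by left; exact: gen0.
move: Ha; rewrite mem_rcons in_cons => /orP[/eqP ->|a_s]; first by right; exists x'.
case: IH => [gx'|[y gy ->]]; first by left; exact: genS.
right; exists (a + y); last by rewrite addnCA.
by apply: genS => //; rewrite mem_rcons in_cons a_s orbT.
Qed.

Lemma gen_rcons_l s M x : gen s x -> gen (rcons s M) x.
Proof. by apply: gen_subset => y ys; rewrite mem_rcons in_cons ys orbT. Qed.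

Lemma gen_filter_lt s x z : gen s z -> z < x -> gen [seq y <- s | y != x] z.
Proof.
elim=> [|a z' Ha _ IH] lt; first exact: gen0.
apply: genS; last by apply: IH; lia.
by rewrite mem_filter Ha andbT; apply/eqP => ax; lia.
Qed.

Lemma gen_filter_redundant s x z :
  gen [seq y <- s | y != x] x -> gen s z -> gen [seq y <- s | y != x] z.
Proof.
move=> gx; elim=> [|a y Ha _ IH]; first exact: gen0.
have [-> | ne] := eqVneq a x; first exact: gen_add.
by apply: genS => //; rewrite mem_filter Ha ne.
Qed.

Lemma gen_below_mod0 s m r x :
  {in s, forall a, a = m \/ r <= a} -> gen s x -> x < r -> x %% m = 0.
Proof.
move=> hs; elim=> [|a x' Ha _ IH] lt; first by rewrite mod0n.
by case: (hs a Ha) => [->|]; [rewrite modnDl IH //; lia | lia].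
Qed.

Lemma gen_summand_mod_neq0 A m x : gen A x -> x %% m != 0 ->
  exists g, [/\ g \in A, g %% m != 0, g <= x & gen A (x - g)].
Proof.
elim=> [|a x' Ha gx IH]; first by rewrite mod0n.
have [a0 | an] := eqVneq (a %% m) 0 => nz; last first.
  by exists a; split => //; [rewrite leq_addr | rewrite addKn].
have : x' %% m != 0 by move: nz; rewrite -modnDml a0.
case/IH => g [gA gn gx' gr]; exists g; split => //; first exact: leq_trans gx' (leq_addl _ _).
by rewrite -addnBA //; apply: genS.
Qed.

Lemma sorted_rcons_lt s M : sorted ltn (rcons s M) -> {in s, forall g, g < M}.
Proof.
by rewrite -cats1 (sorted_pairwise ltn_trans) pairwise_cat allrel1r => /andP[/allP lt _].
Qed.

Lemma modnD_small m a b : a %% m + b %% m < m -> (a + b) %% m = a %% m + b %% m.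
Proof. by move=> lt; rewrite modnD; [rewrite leqNgt lt mul0n subn0 | lia]. Qed.

Lemma modnB_small m x g :
  0 < m -> g <= x -> g %% m <= x %% m -> (x - g) %% m = x %% m - g %% m.
Proof. by move=> m0 gx le; rewrite modnB // ltnNge le mul0n add0n. Qed.

Lemma modnD_wrap m M y :
  0 < m -> (M + y) %% m < M %% m -> y %% m = (M + y) %% m + m - M %% m.
Proof.
move=> m0; rewrite modnD //; have := ltn_pmod y m0; have := ltn_pmod M m0.
by move: (M %% m) (y %% m) => a b; case: (leqP m (a + b)) => /=; lia.
Qed.

Lemma numsg_gen A m r : 0 < m -> m \in A -> r \in A -> r %% m = 1 -> numsg (gen A).
Proof.
move=> m0 mA rA r1; split; [exact: gen0 | exact: gen_add |].
exists (m.-1 * r) => n le.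
have ir_le : n %% m * r <= n.
  by apply: leq_trans le; rewrite leq_mul2r -ltnS prednK // ltn_pmod // orbT.
have dvd : m %| n - n %% m * r.
  by rewrite -eqn_mod_dvd // -modnMm r1 muln1 !modn_mod.
by rewrite -(subnKC ir_le) -(divnK dvd); apply: gen_add; apply: gen_mul.
Qed.

Definition irreducible (S : nat -> Prop) x :=
  [/\ S x, 0 < x & forall a b, S a -> S b -> x = a + b -> a = 0 \/ b = 0].

Lemma irreducible_mem S t g :
  irreducible S g -> (forall x, gen t x -> S x) -> gen t g -> g \in t.
Proof.
move=> [Sg g0 Hg] tS gt; suff: forall x, gen t x -> x = g -> g \in t by move/(_ g gt erefl).
move=> x; elim=> [|a z Ha gz IH] E; first by move: g0; rewrite -E.
have [a0 | z0] := Hg a z (tS a (gen_mem Ha)) (tS z gz) (esym E); last by rewrite -E z0 addn0.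
by apply: IH; rewrite -E a0.
Qed.

Lemma irreducible_le S N x : (forall n, N <= n -> S n) -> irreducible S x -> x <= (N + N).+1.
Proof.
move=> SN [_ x0 Hx]; rewrite leqNgt; apply/negP => lt.
have SN1 : S N.+1 by apply: SN.
have Srest : S (x - N.+1) by apply: SN; lia.
have E : x = N.+1 + (x - N.+1) by lia.
by case: (Hx _ _ SN1 Srest E); lia.
Qed.

Lemma gen_irreducibles S s x :
  (forall y, irreducible S y -> y \in s) -> S x -> gen s x.
Proof.
move=> sirr; elim/ltn_ind: x => x IH Sx.
have [-> | x0] := posnP x; first exact: gen0.
case: (classic (irreducible S x)) => [/sirr/gen_mem // | red].
have [a [b [Sa Sb E a0 b0]]] : exists a b, [/\ S a, S b, x = a + b, 0 < a & 0 < b].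
  apply: NNPP => H; apply: red; split => // a b Sa Sb E.
  have [|a0] := posnP a; first by left.
  have [|b0] := posnP b; first by right.
  by case: H; exists a, b.
by rewrite E; apply: gen_add; apply: IH => //; lia.
Qed.

Lemma is_msg_mem S s x : is_msg S s -> (x \in s <-> irreducible S x).
Proof.
move=> [so gs mn]; split=> [xs|ix]; last first.
  by apply: (irreducible_mem ix) => [y /gs //|]; case: ix => Sx _ _; apply/gs.
suff redundant : ~ gen [seq y <- s | y != x] x.
  split; first by apply/gs/gen_mem.
    by rewrite lt0n; apply/eqP => x0; apply: redundant; rewrite x0; exact: gen0.
  move=> a b Sa Sb E; have [|a0] := posnP a; first by left.
  have [|b0] := posnP b; first by right.
  by case: redundant; rewrite E; apply: gen_add; apply: gen_filter_lt; by [apply/gs | lia].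
move=> gx.
have : {subset s <= [seq y <- s | y != x]}.
  apply: mn => [y|y]; first by rewrite mem_filter => /andP[].
  split=> [gy|/gs gy]; last exact: gen_filter_redundant gx gy.
  by apply/gs; apply: gen_subset gy => z; rewrite mem_filter => /andP[].
by move/(_ x xs); rewrite mem_filter eqxx.
Qed.

Lemma is_msg_uniq S s1 s2 : is_msg S s1 -> is_msg S s2 -> s1 = s2.
Proof.
move=> h1 h2; have [so1 _ _] := h1; have [so2 _ _] := h2.
apply: (irr_sorted_eq ltn_trans ltnn) => // x.
by apply/idP/idP => [/(is_msg_mem x h1)/(is_msg_mem x h2) |
                    /(is_msg_mem x h2)/(is_msg_mem x h1)].
Qed.

Lemma msg_exists S : numsg S -> exists s, is_msg S s.
Proof.
move=> nS; have [_ _ [N SN]] := nS.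
pose s := [seq x <- iota 1 (N + N).+1 | is_left (excluded_middle_informative (irreducible S x))].
have mem_s x : x \in s <-> irreducible S x.
  rewrite mem_filter mem_iota; case: excluded_middle_informative => ix /=; last by split.
  split=> // _; have [_ x0 _] := ix; have := irreducible_le SN ix; lia.
exists s; split.
- exact: (sorted_filter ltn_trans _ (iota_ltn_sorted 1 _)).
- move=> x; split; first by apply: gen_min => // a /mem_s [].
  by apply: gen_irreducibles => y /mem_s.
- move=> u _ gu y /mem_s iy; apply: (irreducible_mem iy) => [x /gu // |].
  by apply/gu; case: iy.
Qed.

Lemma msg_spec S : numsg S -> is_msg S (msg S).
Proof. by move=> nS; apply: epsilon_spec; apply: msg_exists. Qed.

Lemma msg_eq S s : is_msg S s -> msg S = s.
Proof. by move=> h; apply: (is_msg_uniq _ h); apply: epsilon_spec; exists s. Qed.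

Lemma is_msg_seteq S T s : seteq S T -> is_msg S s -> is_msg T s.
Proof.
move=> e [so gs mn]; split => // [x | u us gu]; first by rewrite -e.
by apply: mn => // x; rewrite e.
Qed.

Lemma msg_seteq S T : numsg S -> seteq S T -> msg T = msg S.
Proof. by move=> nS e; apply/msg_eq/(is_msg_seteq e)/msg_spec. Qed.

Lemma numsg_seteq S T : seteq S T -> numsg S -> numsg T.
Proof.
move=> e [S0 Sadd [N SN]]; split; first exact/e.
  by move=> x y /e Sx /e Sy; apply/e; apply: Sadd.
by exists N => n /SN /e.
Qed.

Lemma is_w_seteq S T m i w : seteq S T -> is_w T m i w -> is_w S m i w.
Proof. by move=> e [Tw wi wmin]; split => // [|y /e]; [exact/e | exact: wmin]. Qed.

Lemma MA_seteq m r S T : seteq S T -> MA m r S -> MA m r T.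
Proof.
move=> e [[nS mansS] mS rS_]; have ms := msg_seteq nS e.
have mT : mult T = mult S by rewrite /mult ms.
have rT : rS T = rS S by rewrite /rS ms.
split; rewrite ?mT ?rT //; split; first exact: numsg_seteq e nS.
rewrite mT => i j wi wj i1 ij jm /(is_w_seteq e) wi_w /(is_w_seteq e) wj_w.
exact: mansS wi_w wj_w.
Qed.

Lemma is_msg_gen_rcons S s M : is_msg S (rcons s M) -> is_msg (gen s) s.
Proof.
move=> msgS; have [so gs _] := msgS; split => //.
  exact: (subseq_sorted ltn_trans (subseq_rcons _ M) so).
move=> u _ gu g g_s.
have [_ g0 Hg] : irreducible S g.
  by apply/(is_msg_mem g msgS); rewrite mem_rcons in_cons g_s orbT.
have g_irr : irreducible (gen s) g.
  split => [|//|a b ga gb]; first exact: gen_mem.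
  by apply: Hg; apply/gs/gen_rcons_l.
by apply: (irreducible_mem g_irr) => [x /gu // |]; apply/gu/gen_mem.
Qed.

Lemma ex_minimal (P : nat -> Prop) n : P n -> exists x, P x /\ forall y, P y -> x <= y.
Proof.
elim/ltn_ind: n => n IH Pn.
case: (classic (exists2 y, y < n & P y)) => [[y yn Py] | H]; first exact: IH Py.
exists n; split => // y Py; rewrite leqNgt; apply/negP => yn; apply: H; by exists y.
Qed.

Lemma w_exists S m i : numsg S -> 0 < m -> exists w, is_w S m i w.
Proof.
move=> [_ _ [N SN]] m0.
have P0 : S (i + N * m) /\ i + N * m = i %[mod m].
  by split; [apply: SN; have := leq_pmull N m0; lia | rewrite addnC modnMDl].
have [w [[Sw wi] wmin]] := @ex_minimal (fun x => S x /\ x = i %[mod m]) _ P0.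
by exists w; split => // y Sy yi; apply: wmin.
Qed.

Lemma is_w_uniq S m i w1 w2 : is_w S m i w1 -> is_w S m i w2 -> w1 = w2.
Proof. by move=> [S1 e1 min1] [S2 e2 min2]; apply/eqP; rewrite eqn_leq min1 ?min2. Qed.

Lemma irreducible_is_w S m g :
  numsg S -> S m -> 0 < m -> g != m -> irreducible S g -> is_w S m (g %% m) g.
Proof.
move=> [S0 Sadd _] Sm m0 gm [Sg g0 Hg]; split => //; first by rewrite modn_mod.
move=> y Sy; rewrite modn_mod => yg; rewrite leqNgt; apply/negP => lt.
have dvd : m %| g - y by rewrite -eqn_mod_dvd ?yg // ltnW.
have t0 : 0 < (g - y) %/ m by rewrite divn_gt0 // dvdn_leq // subn_gt0.
have Smul u : S (u * m) by elim: u => [|u IH]; [rewrite mul0n | rewrite mulSn; apply: Sadd].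
have E : g = m + (y + ((g - y) %/ m).-1 * m).
  by move: (divnK dvd); rewrite -{1}(prednK t0) mulSn; lia.
have [m_eq0 | rest_eq0] := Hg _ _ Sm (Sadd _ _ Sy (Smul _)) E; first lia.
by move: gm; rewrite E rest_eq0 addn0 eqxx.
Qed.

Lemma is_w_lt_of_descent S m :
  (forall j x, 1 < j < m -> S x -> x %% m = j -> exists2 y, S y & y %% m = j.-1 /\ y < x) ->
  forall i j wi wj, 0 < i -> i < j -> j <= m.-1 -> is_w S m i wi -> is_w S m j wj -> wi < wj.
Proof.
move=> desc i j wi wj i0 ij jm [_ _ wimin] [Swj wjm _].
have desc_to_i d x : i + d < m -> S x -> x %% m = i + d.+1 ->
    exists2 y, S y & y %% m = i /\ y < x.
  elim: d x => [|d IH] x lt Sx xm.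
    have [y Sy [ym yx]] := desc (i + 1) x ltac:(lia) Sx xm.
    by exists y => //; rewrite ym addn1.
  have [y Sy [ym yx]] := desc (i + d.+2) x ltac:(lia) Sx xm.
  have [z Sz [zm zy]] := IH y ltac:(lia) Sy ltac:(by rewrite ym addnS).
  by exists z => //; split => //; apply: ltn_trans yx.
have wj_mod : wj %% m = i + (j - i).-1.+1 by rewrite wjm modn_small; lia.
have [y Sy [ym yx]] := desc_to_i (j - i).-1 wj ltac:(lia) Swj wj_mod.
by apply: leq_ltn_trans yx; apply: wimin; rewrite // ym modn_small //; lia.
Qed.

Section DropLargestGenerator.

Variables (S : nat -> Prop) (m r M : nat) (t : seq nat).
Hypotheses (m_gt1 : 1 < m) (numsgS : numsg S).
Hypothesis msgS : is_msg S (rcons [:: m, r & t] M).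
Hypothesis mansS : forall i j wi wj, 0 < i -> i < j -> j <= m.-1 ->
  is_w S m i wi -> is_w S m j wj -> wi < wj.

Local Notation s := [:: m, r & t].
Local Notation k := (M %% m).

Let m_gt0 : 0 < m. Proof. exact: ltnW. Qed.

Let S_gen x : S x <-> gen (rcons s M) x.
Proof. by have [_ gs _] := msgS; split => /gs. Qed.

Let gen_s_sub x : gen s x -> S x.
Proof. by move/gen_rcons_l/S_gen. Qed.

Let mem_s_lt_M g : g \in s -> g < M.
Proof. by have [so _ _] := msgS; apply: sorted_rcons_lt. Qed.

Let m_lt_r : m < r.
Proof. by have [/andP[]] := msgS. Qed.

Let generator_eq_m_or_ge_r a : a \in rcons s M -> a = m \/ r <= a.
Proof.
have [/= /andP[_ /(order_path_min ltn_trans)/allP gt_r] _ _] := msgS.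
rewrite !in_cons => /orP[/eqP ->|/orP[/eqP ->|/gt_r/ltnW]]; by [left | right].
Qed.

Let S_m : S m.
Proof. exact/gen_s_sub/gen_mem/mem_head. Qed.

Let generator_is_w a : a \in rcons s M -> a != m -> is_w S m (a %% m) a.
Proof. by move=> aS am; apply: irreducible_is_w numsgS S_m m_gt0 am _; apply/(is_msg_mem a msgS). Qed.

Let M_is_w : is_w S m k M.
Proof.
by apply: generator_is_w; [rewrite mem_rcons mem_head | rewrite gtn_eqF ?mem_s_lt_M ?mem_head].
Qed.

Let k_gt0 : 0 < k.
Proof.
have [S0 _ _] := numsgS; have [_ _ Mmin] := M_is_w.
rewrite lt0n; apply/eqP => k0; have := Mmin 0 S0; rewrite k0 mod0n => /(_ erefl).
by rewrite leqn0 => /eqP M0; move: (mem_s_lt_M (mem_head m _)); rewrite M0.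
Qed.

Let residue_lt_k g : g \in s -> g %% m != 0 -> g %% m < k.
Proof.
move=> gs gn; have gm : g != m by apply: contraNneq gn => ->; rewrite modnn.
have gS : g \in rcons s M by rewrite mem_rcons in_cons gs orbT.
have g_w := generator_is_w gS gm.
case: (ltngtP (g %% m) k) => // [k_lt | g_eq].
  have : M < g by apply: mansS M_is_w g_w; rewrite // -ltnS prednK // ltn_pmod.
  by rewrite ltnNge ltnW ?mem_s_lt_M.
by move: g_w; rewrite g_eq => /(is_w_uniq M_is_w) Mg; move: (mem_s_lt_M gs); rewrite Mg ltnn.
Qed.

Let r_mod_m : r %% m = 1.
Proof.
have rS : r \in rcons s M by rewrite mem_rcons !in_cons eqxx !orbT.
have r_w := generator_is_w rS (negbT (gtn_eqF m_lt_r)).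
have [w1 w1_w] := w_exists 1 numsgS m_gt0.
have rn0 : r %% m != 0.
  have [S0 _ _] := numsgS; have [_ _ rmin] := r_w.
  apply/eqP => r0; have := rmin 0 S0; rewrite r0 mod0n => /(_ erefl).
  by rewrite leqn0 => /eqP r_eq0; move: m_lt_r; rewrite r_eq0.
apply/eqP; apply: contraT => r_ne1.
have r_gt1 : 1 < r %% m by rewrite ltn_neqAle eq_sym r_ne1 lt0n.
have r_le : r %% m <= m.-1 by rewrite -ltnS prednK // ltn_pmod.
have w1_lt_r : w1 < r := mansS (ltnSn 0) r_gt1 r_le w1_w r_w.
have [Sw1 w1_mod _] := w1_w.
have := gen_below_mod0 generator_eq_m_or_ge_r (proj1 (S_gen w1) Sw1) w1_lt_r.
by rewrite w1_mod modn_small.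
Qed.

Let w_in_gen_s i w : 0 < i < k -> is_w S m i w -> gen s w.
Proof.
move=> /andP[i0 ik] w_w; have [Sw w_mod _] := w_w.
have [//|[y gy w_eq]] := gen_rcons (proj1 (S_gen w) Sw).
have k_lt := ltn_pmod M m_gt0.
have My_mod : (M + y) %% m = i by rewrite -w_eq w_mod modn_small //; lia.
have y_mod : y %% m = i + m - k by rewrite (@modnD_wrap m M y m_gt0) My_mod.
have [w' w'_w] := w_exists (i + m - k) numsgS m_gt0.
have w_lt_w' : w < w' by apply: mansS w_w w'_w; lia.
have [_ _ w'_min] := w'_w.
have small : i + m - k < m by lia.
have : w' <= y by apply: w'_min; [exact/S_gen | rewrite y_mod (modn_small small)].
lia.
Qed.

Let gen_s_descent j x : 1 < j < m -> gen s x -> x %% m = j ->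
  exists2 y, gen s y & y %% m = j.-1 /\ y < x.
Proof.
elim/ltn_ind: j x => j IH x /andP[j1 jm] gx xj.
have [jk | kj] := leqP j k.
  have [w w_w] := w_exists j.-1 numsgS m_gt0.
  have [wj wj_w] := w_exists j numsgS m_gt0.
  have w_lt_wj : w < wj by apply: mansS w_w wj_w; lia.
  have [_ w_mod _] := w_w; have [_ _ wj_min] := wj_w.
  exists w; first by apply: w_in_gen_s w_w; lia.
  split; first by rewrite w_mod modn_small //; lia.
  by apply: leq_trans w_lt_wj _; apply: wj_min; [exact: gen_s_sub | rewrite xj modn_small].
have x_mod : x %% m != 0 by rewrite xj -lt0n (ltnW j1).
have [g [gs g_mod gx' gxg]] := gen_summand_mod_neq0 gx x_mod.
have g_pos : 0 < g by rewrite lt0n; apply: contraNneq g_mod => ->; rewrite mod0n.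
have xg_lt : x - g < x by rewrite ltn_subrL g_pos (leq_trans g_pos gx').
have c_lt_j : g %% m < j := ltn_trans (residue_lt_k gs g_mod) kj.
have g_le_x_mod : g %% m <= x %% m by rewrite xj ltnW.
have xg_mod : (x - g) %% m = j - g %% m by rewrite modnB_small // xj.
have [g1 | g_ne1] := eqVneq (g %% m) 1; first by exists (x - g); rewrite // xg_mod g1 subn1.
have c_range : 1 < g %% m < m by rewrite ltn_neqAle eq_sym g_ne1 lt0n g_mod ltn_pmod.
have [z gz [z_mod zg]] := IH _ c_lt_j g c_range (gen_mem gs) erefl.
exists (x - g + z); first exact: gen_add.
move: (g %% m) c_range c_lt_j xg_mod z_mod => c c_range c_lt_j xg_mod z_mod.
have sum_eq : (j - c) + c.-1 = j.-1 by clear -c_range c_lt_j; lia.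
have sum_lt : (x - g) %% m + z %% m < m by rewrite xg_mod z_mod sum_eq; clear -j1 jm; lia.
by rewrite (modnD_small sum_lt) xg_mod z_mod sum_eq; split => //; clear -zg gx'; lia.
Qed.

Lemma MA_drop_largest_generator : MA m r (gen s).
Proof.
have msg_s := msg_eq (is_msg_gen_rcons msgS).
have mult_s : mult (gen s) = m by rewrite /mult msg_s.
split; [split | exact: mult_s | by rewrite /rS msg_s].
  have r_in_s : r \in s by rewrite !inE eqxx orbT.
  exact: numsg_gen m_gt0 (mem_head _ _) r_in_s r_mod_m.
rewrite mult_s; apply: is_w_lt_of_descent => j x j_range gx xj; exact: gen_s_descent.
Qed.

End DropLargestGenerator.

Definition drop_max (T : nat -> Prop) : seq nat := [seq y <- msg T | y != MS T].

Lemma MA_drop_max m r T : 1 < m -> MA m r T -> 2 < emb T ->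
  [/\ MA m r (gen (drop_max T)), msg (gen (drop_max T)) = drop_max T
    & (size (drop_max T)).+1 = emb T].
Proof.
move=> m1 [[nT mansT] multT rT] e3.
have msgT := msg_spec nT; rewrite multT in mansT.
rewrite /drop_max /MS /emb; rewrite /emb in e3; move: multT rT msgT e3; rewrite /mult /rS.
case/lastP: (msg T) => [//|s M] hm hr msgT e3.
have [so _ _] := msgT.
have -> : [seq y <- rcons s M | y != last 0 (rcons s M)] = s.
  rewrite last_rcons filter_rcons eqxx; apply/all_filterP/allP => y /(sorted_rcons_lt so).
  by rewrite ltn_neqAle => /andP[].
rewrite size_rcons; move: hm hr msgT e3; rewrite size_rcons.
case: s {so} => [|a [|b t]] //= hm hr msgT _; subst m r.
split=> //; first exact: MA_drop_largest_generator m1 nT msgT mansT.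
exact/msg_eq/(@is_msg_gen_rcons T [:: a, b & t] M).
Qed.

Lemma MA_emb_gt1 m r T : 0 < r -> MA m r T -> 1 < emb T.
Proof.
move=> r0 [_ _ hr]; rewrite ltnNge; apply/negP => le.
by move: hr r0; rewrite /rS nth_default // => <-.
Qed.

Lemma MA_emb2 m r T : MA m r T -> emb T = 2 -> seteq T (gen [:: m; r]).
Proof.
move=> [[nT _] hm hr]; have [_ gs _] := msg_spec nT.
move: hm hr gs; rewrite /emb /mult /rS; case: (msg T) => [|a [|b [|c u]]] //= -> -> gs _ x.
by split => /gs.
Qed.

Lemma emb_seteq S T : numsg S -> seteq S T -> emb T = emb S.
Proof. by move=> nS e; rewrite /emb (msg_seteq nS e). Qed.

Lemma Sseq_succ_fixed S m r n : seteq (Sseq S m r n) (gen [:: m; r]) ->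
  seteq (Sseq S m r n.+1) (gen [:: m; r]).
Proof. by move=> e x /=; split => [[[]//|[]//] | gx]; right. Qed.

Lemma Sseq_succ_drop_max S m r n : ~ seteq (Sseq S m r n) (gen [:: m; r]) ->
  seteq (Sseq S m r n.+1) (gen (drop_max (Sseq S m r n))).
Proof. by move=> ne x /=; split => [[[]//|[]//] | gx]; left. Qed.

Lemma Sseq_MA m r S n : 1 < m -> 2 < r -> MA m r S ->
  MA m r (Sseq S m r n) /\
  (seteq (Sseq S m r n) (gen [:: m; r]) \/ emb (Sseq S m r n) + n = emb S).
Proof.
move=> m1 r2 hS; elim: n => [|n [hT hd]]; first by split => //; right; rewrite addn0.
case: (classic (seteq (Sseq S m r n) (gen [:: m; r]))) => [fixed | not_fixed].
  have fixed' := Sseq_succ_fixed fixed.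
  split; last by left.
  by apply: MA_seteq hT => x; split => [/fixed/fixed' | /fixed'/fixed].
have e3 : 2 < emb (Sseq S m r n).
  rewrite ltn_neqAle (MA_emb_gt1 (ltnW (ltnW r2)) hT) andbT eq_sym.
  by apply/eqP => /(MA_emb2 hT).
have [hD msgD sizeD] := MA_drop_max m1 hT e3.
have e := Sseq_succ_drop_max not_fixed.
have e' : seteq (gen (drop_max (Sseq S m r n))) (Sseq S m r n.+1) by move=> x; rewrite e.
split; first exact: MA_seteq e' hD.
right; case: hd => [//|hd].
have [[nD _] _ _] := hD.
by rewrite (emb_seteq nD e') -hd -sizeD /emb msgD addnS addSn.
Qed.

Theorem proposition4p8 (m r : nat) (S : nat -> Prop) :
  1 < m -> 2 < r -> MA m r S ->
  (forall n, MA m r (Sseq S m r n)) /\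
  (forall k, emb S - 2 <= k -> seteq (Sseq S m r k) (gen [:: m; r])).
Proof.
move=> m1 r2 hS; split=> [n | k le]; first exact: (Sseq_MA n m1 r2 hS).1.
have [hk [//|ek]] := Sseq_MA k m1 r2 hS.
apply: (MA_emb2 hk); have := MA_emb_gt1 (ltnW (ltnW r2)) hk; lia.
Qed.
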